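(* Consider a common-value auction for a single item among at least two ''slow'' bidders and one ''fast'' bidder, all risk neutral. The value of the item evolves as $v_t = e^{m_t} v_0$ for $t \ge 0$, where $v_0>0$ and $m_t \sim N(-\tfrac{\sigma^2}{2} t, \sigma^2 t)$ (a geometric Brownian motion with $\sigma>0$, so $\mathbb{E}[v_{t+\delta}\mid v_t] = v_t$ for all $t,\delta\ge 0$). The slow bidders submit sealed bids at time $0$. With probability $p \in [0,1]$ (independently of the value process), the fast bidder gets an opportunity at time $\Delta>0$, after observing the slow bidders' bids and $v_\Delta$, to submit a bid that outbids the highest slow bid; otherwise the fast bidder does not bid. The highest bidder wins, pays its own bid, and receives the realized value of the item (with expected value $v_0$ given time-$0$ information). Then in equilibrium the winning slow bidder's time-$0$ bid is the largest $b_0^S \in [0, v_0]$ solving $$(1-p)(v_0 - b_0^S) + p\, P(v_\Delta < b_0^S)\big(\mathbb{E}[v_\Delta \mid v_\Delta < b_0^S] - b_0^S\big) = 0,$$ and the slow bidder wins the item with probability $p\, P(v_\Delta < b_0^S) + (1-p)$.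
   Context: A bidder's payoff is the value of the item minus its bid if it wins, and $0$ otherwise. If given a revision opportunity, the fast bidder outbids the highest slow bid $b$ (paying $b$) exactly when $v_\Delta > b$. *)

From HB Require Import structures.
From mathcomp Require Import all_boot all_order all_algebra.
From mathcomp Require Import all_classical all_reals all_analysis.
From mathcomp Require Import normal_distribution.
Set Implicit Arguments. Unset Strict Implicit. Unset Printing Implicit Defensive.
Import Order.TTheory GRing.Theory Num.Theory.
Local Open Scope classical_set_scope.
Local Open Scope ring_scope.

(* Model: v_Delta = v0 * exp(m), m ~ N(-sigma^2 Delta/2, sigma^2 Delta).
   We integrate against the normal density (mean mu, standard deviation sd)
   with respect to Lebesgue measure on R. *)

Definition gbm_mean {R : realType} (sigma Delta : R) : R := - (sigma ^+ 2 * Delta) / 2.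
Definition gbm_sd {R : realType} (sigma Delta : R) : R := sigma * Num.sqrt Delta.

Definition vD {R : realType} (v0 x : R) : R := v0 * expR x.

(* E[ g(v_Delta) ; v_Delta in A ] *)
Definition lnE {R : realType} (sigma Delta v0 : R) (A : set R) (g : R -> R) : R :=
  Rintegral (@lebesgue_measure R) [set x | A (vD v0 x)]
    (fun x => g (vD v0 x) * normal_pdf (gbm_mean sigma Delta) (gbm_sd sigma Delta) x).

Definition P_lt {R : realType} (sigma Delta v0 b : R) : R :=
  lnE sigma Delta v0 [set y | y < b] (fun _ => 1).
Definition P_le {R : realType} (sigma Delta v0 b : R) : R :=
  lnE sigma Delta v0 [set y | y <= b] (fun _ => 1).

(* E[v_Delta | v_Delta < b] = E[v_Delta ; v_Delta < b] / P(v_Delta < b)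
   (mathcomp convention x / 0 = 0 when the conditioning event is null) *)
Definition condE_lt {R : realType} (sigma Delta v0 b : R) : R :=
  lnE sigma Delta v0 [set y | y < b] id / P_lt sigma Delta v0 b.

Definition zero_profit {R : realType} (sigma Delta v0 p b : R) : Prop :=
  (1 - p) * (v0 - b)
  + p * P_lt sigma Delta v0 b * (condE_lt sigma Delta v0 b - b) = 0.

(* highest slow bid (bids are nonnegative) *)
Definition high_bid {R : realType} n (bids : 'I_n -> R) : R :=
  \big[Order.max/0]_(i < n) bids i.

(* expected payoff of the slow bidders' highest bid B if it wins:
   - with prob. 1-p the fast bidder does not bid: value v0 (expected), pay B;
   - with prob. p the fast bidder observes v_Delta and outbids (paying B)
     exactly when v_Delta > B; otherwise the slow bidder wins, receiving an item
     whose expected value given v_Delta is v_Delta (martingale), and pays B. *)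
Definition win_profit {R : realType} (sigma Delta v0 p B : R) : R :=
  (1 - p) * (v0 - B) + p * lnE sigma Delta v0 [set y | y <= B] (fun y => y - B).

(* expected payoff of slow bidder i; ties among the highest slow bids are
   broken uniformly at random *)
Definition slow_payoff {R : realType} (sigma Delta v0 p : R) n
    (bids : 'I_n -> R) (i : 'I_n) : R :=
  if bids i == high_bid bids then
    win_profit sigma Delta v0 p (high_bid bids)
      / (#|[set j | bids j == high_bid bids]|)%:R
  else 0.

Definition deviate {R : realType} n (bids : 'I_n -> R) (i : 'I_n) (b : R) : 'I_n -> R :=
  fun j => if j == i then b else bids j.

Definition slow_equilibrium {R : realType} (sigma Delta v0 p : R) n
    (bids : 'I_n -> R) : Prop :=
  (forall i, 0 <= bids i) /\
  forall i (b : R), 0 <= b ->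
    slow_payoff sigma Delta v0 p (deviate bids i b) i
      <= slow_payoff sigma Delta v0 p bids i.

Definition slow_win_prob {R : realType} (sigma Delta v0 p : R) n (bids : 'I_n -> R) : R :=
  (1 - p) + p * P_le sigma Delta v0 (high_bid bids).

(* Write G(b) = E[(b - v_Delta)^+] for the value of a put struck at b.
   Winning with the highest slow bid B earns W(B) = (1 - p)(v0 - B) - p G(B),
   and since P(v_Delta < b) (E[v_Delta | v_Delta < b] - b) = - G(b), the
   zero-profit equation says exactly W(b) = 0.  G is nondecreasing,
   1-Lipschitz, vanishes at 0 and is positive on (0, oo) because the lognormal
   law has full support; hence W is continuous, W(0) >= 0 >= W(v0), and W is
   negative to the right of any point where it is <= 0, so W has exactly one
   zero on [0, oo), which lies in [0, v0].
   Bertrand competition among at least two slow bidders forces W(B) = 0 in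
   equilibrium: bidding 0 guarantees a nonnegative payoff, and if W(B) > 0
   some bidder earns at most W(B)/2 and gains by overbidding slightly.
   Conversely, all slow bidders bidding the zero of W is an equilibrium.
   Finally {v_Delta = B} is null, so P(v_Delta <= B) = P(v_Delta < B). *)

From HB Require Import structures.
From mathcomp Require Import all_boot all_order all_algebra.
From mathcomp Require Import all_classical all_reals all_analysis.
From mathcomp Require Import measurable_realfun normal_distribution ring lra.
Set Implicit Arguments. Unset Strict Implicit. Unset Printing Implicit Defensive.
Import Order.TTheory GRing.Theory Num.Theory numFieldNormedType.Exports.
Local Open Scope classical_set_scope.
Local Open Scope ring_scope.

Lemma nonexpansive_continuous {R : realType} (f : R -> R) :
  (forall x y, `|f x - f y| <= `|x - y|) -> continuous f.
Proof.
move=> f_nexp x; apply/cvgrPdist_lt => e e_gt0; exists e => //= y xy.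
exact: le_lt_trans (f_nexp x y) xy.
Qed.

Lemma integrable_dominated {d} {T : measurableType d} {R : realType}
    (mu : {measure set T -> \bar R}) (D : set T) (f g : T -> R) (c : R) :
  measurable D -> measurable_fun setT f -> mu.-integrable setT (EFin \o g) ->
  (forall x, D x -> `|f x| <= c * g x) -> mu.-integrable D (EFin \o f).
Proof.
move=> mD mf ig fg.
apply: (@le_integrable _ _ _ mu _ mD _ (fun x => (c * g x)%:E)).
- exact/measurable_EFinP/(measurable_funS measurableT).
- by move=> x Dx /=; rewrite lee_fin (le_trans (fg x Dx)) ?ler_norm.
- under eq_fun do rewrite EFinM.
  exact/integrableZl/(integrableS measurableT).
Qed.

Lemma Rintegral_gt0_itv {R : realType} (f : R -> R) (a b : R) : a < b ->
  (@lebesgue_measure R).-integrable setT (EFin \o f) ->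
  (forall x, 0 <= f x) -> (forall x, a < x < b -> 0 < f x) ->
  0 < \int[@lebesgue_measure R]_x f x.
Proof.
move=> ab intf f_ge0 f_gt0.
rewrite lt_neqAle Rintegral_ge0 // andbT; apply/eqP => /esym If0.
have I0 : (\int[lebesgue_measure]_x `|(f x)%:E| = 0)%E.
  under eq_integral do rewrite gee0_abs ?lee_fin //.
  by rewrite -(fineK (integrable_fin_num measurableT intf)) [fine _]If0.
have [N [mN N0 fN]] := (ae_eq_integral_abs _ measurableT (measurable_int _ intf)).1 I0.
have abN : [set` Interval (BRight a) (BLeft b)] `<=` N.
  move=> x; rewrite /= in_itv /= => xab; apply: fN => /(_ I) /= /(congr1 fine) /= fx0.
  by have := f_gt0 x xab; rewrite fx0 ltxx.
have itv_gt0 : (0 < (@lebesgue_measure R) [set` Interval (BRight a) (BLeft b)])%E.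
  by rewrite lebesgue_measure_itv /= lte_fin ab -EFinD lte_fin subr_gt0.
have N_le0 : (lebesgue_measure N <= 0)%E by rewrite N0.
have := @le_measure _ _ _ lebesgue_measure _ _ _ _ abN.
rewrite !inE => /(_ (measurable_itv _) mN) /le_trans /(_ N_le0).
by move=> /(lt_le_trans itv_gt0); rewrite ltxx.
Qed.

Lemma normal_pdf_gt0 {R : realType} (m s x : R) : s != 0 -> 0 < normal_pdf m s x.
Proof.
by move=> s_neq0; rewrite normal_pdfE // mulr_gt0 ?expR_gt0 ?normal_peak_gt0.
Qed.

Section put_price.
Variables (R : realType) (sigma Delta v0 : R).
Hypothesis v0_gt0 : 0 < v0.

Local Notation mu := (@lebesgue_measure R).
Local Notation phi := (normal_pdf (gbm_mean sigma Delta) (gbm_sd sigma Delta)).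

Definition put_payoff (b x : R) : R := Num.max (b - vD v0 x) 0.

Definition put_price (b : R) : R := \int[mu]_x (put_payoff b x * phi x).

Lemma vD_gt0 x : 0 < vD v0 x.
Proof. by rewrite mulr_gt0 ?expR_gt0. Qed.

Lemma measurable_vD : measurable_fun setT (vD v0).
Proof. by apply: measurable_funM => //; exact: measurable_expR. Qed.

Lemma measurable_put_payoff b : measurable_fun setT (put_payoff b).
Proof.
by apply: measurable_maxr => //; apply: measurable_funB => //; exact: measurable_vD.
Qed.

Lemma put_payoff_ge0 b x : 0 <= put_payoff b x.
Proof. by rewrite le_max lexx orbT. Qed.

Lemma put_payoff_le_norm b x : put_payoff b x <= `|b|.
Proof.
have := vD_gt0 x; have := ler_norm b; have := normr_ge0 b.
by rewrite /put_payoff maxEle; case: (leP (b - vD v0 x) 0) => *; lra.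
Qed.

Lemma put_payoff0 x : put_payoff 0 x = 0.
Proof. by apply/max_r; rewrite sub0r oppr_le0 ltW ?vD_gt0. Qed.

Lemma le_put_payoff b b' x : b <= b' -> put_payoff b x <= put_payoff b' x.
Proof.
move=> bb'; rewrite /put_payoff !maxEle.
by case: (leP (b - vD v0 x) 0); case: (leP (b' - vD v0 x) 0) => *; lra.
Qed.

Lemma put_payoff_nonexpansive b b' x :
  `|put_payoff b x - put_payoff b' x| <= `|b - b'|.
Proof.
have := ler_norm (b - b'); have : b' - b <= `|b - b'| by rewrite distrC ler_norm.
rewrite ler_norml /put_payoff !maxEle.
by case: (leP (b - vD v0 x) 0); case: (leP (b' - vD v0 x) 0) => *; apply/andP; split; lra.
Qed.

Lemma integrable_phi_dominated (D : set R) (f : R -> R) (c : R) :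
  measurable D -> measurable_fun setT f ->
  (forall x, D x -> `|f x| <= c * phi x) -> mu.-integrable D (EFin \o f).
Proof.
move=> mD mf; apply: (@integrable_dominated _ _ R mu D f phi c mD mf).
exact: integrable_normal_pdf.
Qed.

Lemma integrable_put_payoff b :
  mu.-integrable setT (EFin \o (fun x => put_payoff b x * phi x)).
Proof.
apply: (@integrable_phi_dominated _ _ `|b|) => //.
  by apply: measurable_funM; [exact: measurable_put_payoff | exact: measurable_normal_pdf].
move=> x _; rewrite normrM (ger0_norm (put_payoff_ge0 _ _)).
by rewrite ger0_norm ?normal_pdf_ge0 // ler_wpM2r ?normal_pdf_ge0 ?put_payoff_le_norm.
Qed.

Lemma put_price_ge0 b : 0 <= put_price b.
Proof.
by apply: Rintegral_ge0 => x _; rewrite mulr_ge0 ?put_payoff_ge0 ?normal_pdf_ge0.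
Qed.

Lemma put_price0 : put_price 0 = 0.
Proof.
rewrite /put_price (@eq_Rintegral _ _ _ mu _ (fun=> 0)) ?Rintegral_cst ?mul0r // => x _.
by rewrite put_payoff0 mul0r.
Qed.

Lemma le_put_price b b' : b <= b' -> put_price b <= put_price b'.
Proof.
move=> bb'; apply: le_Rintegral; rewrite ?integrable_put_payoff // => x _.
by rewrite ler_wpM2r ?normal_pdf_ge0 ?le_put_payoff.
Qed.

Lemma put_price_nonexpansive b b' : `|put_price b - put_price b'| <= `|b - b'|.
Proof.
pose d x := put_payoff b x * phi x - put_payoff b' x * phi x.
have d_le x : `|d x| <= `|b - b'| * phi x.
  rewrite /d -mulrBl normrM (ger0_norm (normal_pdf_ge0 _ _ _)).
  by rewrite ler_wpM2r ?normal_pdf_ge0 ?put_payoff_nonexpansive.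
have md : measurable_fun setT d.
  by apply: measurable_funB; apply: measurable_funM;
    (exact: measurable_put_payoff || exact: measurable_normal_pdf).
have mphi : measurable_fun setT (fun x => `|b - b'| * phi x).
  by apply: measurable_funM => //; exact: measurable_normal_pdf.
rewrite /put_price -RintegralB ?integrable_put_payoff //.
have int_d := @integrable_phi_dominated _ _ _ measurableT md (fun x _ => d_le x).
apply: le_trans (@le_normr_Rintegral _ _ _ mu setT d measurableT int_d) _.
apply: le_trans (@le_Rintegral _ _ _ mu _ _ (fun x => `|b - b'| * phi x) _ _ _
  (fun x _ => d_le x)) _.
- exact: measurableT.
- have m_abs_d : measurable_fun setT (fun x => `|d x|).
    exact: measurableT_comp.
  apply: (@integrable_phi_dominated _ _ `|b - b'| measurableT m_abs_d).
  by move=> x _; rewrite normr_id d_le.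
- apply: (@integrable_phi_dominated _ _ `|b - b'| measurableT mphi) => x _.
  by rewrite normrM normr_id (ger0_norm (normal_pdf_ge0 _ _ _)).
rewrite RintegralZl //; last exact: integrable_normal_pdf.
by rewrite /Rintegral integral_normal_pdf mulr1.
Qed.

Lemma vD_ltE b x : 0 < b -> (vD v0 x < b) = (x < ln (b / v0)).
Proof.
by move=> b_gt0; rewrite -[RHS]ltr_expR lnK ?posrE ?divr_gt0 // ltr_pdivlMr // mulrC.
Qed.

Lemma vD_leE b x : 0 < b -> (vD v0 x <= b) = (x <= ln (b / v0)).
Proof.
by move=> b_gt0; rewrite -[RHS]ler_expR lnK ?posrE ?divr_gt0 // ler_pdivlMr // mulrC.
Qed.

Lemma put_price_gt0 b : 0 < sigma -> 0 < Delta -> 0 < b -> 0 < put_price b.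
Proof.
move=> sigma_gt0 Delta_gt0 b_gt0.
have sd_neq0 : gbm_sd sigma Delta != 0 by rewrite mulf_neq0 ?gt_eqF ?sqrtr_gt0.
apply: (@Rintegral_gt0_itv _ _ (ln (b / v0) - 1) (ln (b / v0)));
  rewrite ?integrable_put_payoff //.
- by rewrite ltrBlDr ltrDl.
- by move=> x; rewrite mulr_ge0 ?put_payoff_ge0 ?normal_pdf_ge0.
move=> x /andP[_ xa]; rewrite mulr_gt0 ?normal_pdf_gt0 //.
by rewrite lt_max subr_gt0 vD_ltE // xa.
Qed.

Lemma vD_lt_itv b : 0 < b -> [set x | vD v0 x < b] = `]-oo, ln (b / v0)[%classic.
Proof. by move=> b_gt0; apply/seteqP; split=> x; rewrite /= in_itv /= vD_ltE. Qed.

Lemma vD_le_itv b : 0 < b -> [set x | vD v0 x <= b] = `]-oo, ln (b / v0)]%classic.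
Proof. by move=> b_gt0; apply/seteqP; split=> x; rewrite /= in_itv /= vD_leE. Qed.

Lemma vD_le_set0 b : b <= 0 -> [set x | vD v0 x <= b] = set0.
Proof. by move=> b_le0; apply/seteqP; split=> x //= xb; have := vD_gt0 x; lra. Qed.

Lemma vD_lt_set0 b : b <= 0 -> [set x | vD v0 x < b] = set0.
Proof. by move=> b_le0; apply/seteqP; split=> x //= xb; have := vD_gt0 x; lra. Qed.

Lemma measurable_vD_lt b : measurable [set x | vD v0 x < b].
Proof.
have [b_le0|b_gt0] := leP b 0; first by rewrite vD_lt_set0.
by rewrite vD_lt_itv //; exact: measurable_itv.
Qed.

(* [A] may be [y < b] or [y <= b]: the integrand vanishes at [y = b] anyway. *)
Lemma lnE_sub_put_price (A : set R) b :
  (forall y, y < b -> A y) -> (forall y, A y -> y <= b) ->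
  lnE sigma Delta v0 A (fun y => y - b) = - put_price b.
Proof.
move=> ltA Ale; rewrite /lnE Rintegral_mkcond /put_price -[RHS]mulN1r -RintegralZl //;
  last exact: integrable_put_payoff.
apply: eq_Rintegral => x _; rewrite patchE.
case: ifPn => [/set_mem /= /Ale xb | /negP xA].
  have -> : vD v0 x - b = - put_payoff b x.
    by rewrite /put_payoff maxEle; case: leP => *; lra.
  by rewrite mulNr mulN1r.
have -> : put_payoff b x = 0.
  apply/max_r; rewrite subr_le0 leNgt; apply/negP => /ltA xA'.
  by apply: xA; exact: mem_set.
by rewrite mul0r mulr0.
Qed.

Lemma lnE_lt_sub b :
  lnE sigma Delta v0 [set y | y < b] (fun y => y - b)
  = lnE sigma Delta v0 [set y | y < b] id - b * P_lt sigma Delta v0 b.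
Proof.
have mS := measurable_vD_lt b.
have mphi : measurable_fun setT (fun x => 1 * phi x).
  by apply: measurable_funM => //; exact: measurable_normal_pdf.
have int1 : mu.-integrable [set x | vD v0 x < b] (EFin \o (fun x => 1 * phi x)).
  apply: (@integrable_phi_dominated _ _ 1 mS mphi) => x _.
  by rewrite normrM normr1 ger0_norm ?normal_pdf_ge0.
have intb : mu.-integrable [set x | vD v0 x < b] (EFin \o (fun x => b * (1 * phi x))).
  apply: (@integrable_phi_dominated _ _ `|b| mS) => [|x _].
    by apply: measurable_funM.
  by rewrite mul1r normrM (ger0_norm (normal_pdf_ge0 _ _ x)).
have intv : mu.-integrable [set x | vD v0 x < b] (EFin \o (fun x => vD v0 x * phi x)).
  apply: (@integrable_phi_dominated _ _ `|b| mS) => [|x /= xb].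
    by apply: measurable_funM; [exact: measurable_vD | exact: measurable_normal_pdf].
  rewrite normrM (ger0_norm (normal_pdf_ge0 _ _ x)) (ger0_norm (ltW (vD_gt0 x))).
  by rewrite ler_wpM2r ?normal_pdf_ge0 // (le_trans _ (ler_norm b)) ?ltW.
rewrite /P_lt /lnE -RintegralZl // -RintegralB //.
by apply: eq_Rintegral => x _; rewrite mul1r mulrBl.
Qed.

Lemma P_lt_mul_condE_lt_sub b :
  P_lt sigma Delta v0 b * (condE_lt sigma Delta v0 b - b) = - put_price b.
Proof.
have := lnE_lt_sub b; rewrite (@lnE_sub_put_price _ b) //; last by move=> y /ltW.
rewrite /condE_lt; set E := lnE _ _ _ _ id; set P := P_lt _ _ _ _ => E_eq.
have [P0|P_neq0] := eqVneq P 0; last by rewrite mulrBr mulrC divfK // mulrC E_eq.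
(* Here [E / P] is the junk value [E / 0 = 0]; squeeze [E] to [0] instead. *)
have E_ge0 : 0 <= E.
  by apply: Rintegral_ge0 => x _; rewrite mulr_ge0 ?normal_pdf_ge0 ?(ltW (vD_gt0 x)).
have := put_price_ge0 b; move: E_eq; rewrite P0 mulr0 subr0 mul0r; lra.
Qed.

Lemma P_le_lt b : P_le sigma Delta v0 b = P_lt sigma Delta v0 b.
Proof.
rewrite /P_le /P_lt /lnE /=; have [b_le0|b_gt0] := leP b 0.
  by rewrite vD_le_set0 // vD_lt_set0.
rewrite vD_le_itv // vD_lt_itv //; symmetry; apply: Rintegral_itv_bndo_bndc.
rewrite -vD_lt_itv //; apply: (@integrable_phi_dominated _ _ 1 (measurable_vD_lt b)).
  by apply: measurable_funM => //; exact: measurable_normal_pdf.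
by move=> x _; rewrite mul1r ger0_norm ?normal_pdf_ge0.
Qed.

Lemma win_profitE p b :
  win_profit sigma Delta v0 p b = (1 - p) * (v0 - b) - p * put_price b.
Proof. by rewrite /win_profit (@lnE_sub_put_price _ b) ?mulrN // => y /ltW. Qed.

Lemma zero_profitE p b :
  zero_profit sigma Delta v0 p b <-> win_profit sigma Delta v0 p b = 0.
Proof. by rewrite /zero_profit -mulrA P_lt_mul_condE_lt_sub win_profitE mulrN. Qed.

Section win_profit.
Variable p : R.
Hypotheses (p_ge0 : 0 <= p) (p_le1 : p <= 1).

Local Notation W := (win_profit sigma Delta v0 p).

Lemma win_profitB b b' :
  W b - W b' = (1 - p) * (b' - b) + p * (put_price b' - put_price b).
Proof. by rewrite !win_profitE; ring. Qed.

Lemma win_profit_nonexpansive b b' : `|W b - W b'| <= `|b - b'|.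
Proof.
have p1_ge0 : 0 <= 1 - p by rewrite subr_ge0.
rewrite win_profitB; apply: le_trans (ler_normD _ _) _.
rewrite !normrM (ger0_norm p1_ge0) (ger0_norm p_ge0).
apply: le_trans (lerD (lexx _) (ler_wpM2l p_ge0 (put_price_nonexpansive b' b))) _.
by rewrite -mulrDl subrK mul1r distrC.
Qed.

Lemma continuous_win_profit : continuous W.
Proof. exact/nonexpansive_continuous/win_profit_nonexpansive. Qed.

Lemma win_profit_nonincreasing : {homo W : b b' /~ b <= b'}.
Proof.
move=> b b' bb'.
by rewrite -subr_ge0 win_profitB addr_ge0 ?mulr_ge0 ?subr_ge0 ?le_put_price.
Qed.

Lemma win_profit0_ge0 : 0 <= W 0.
Proof. by rewrite win_profitE put_price0 mulr0 !subr0 mulr_ge0 ?subr_ge0 // ltW. Qed.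

Lemma win_profit_v0_le0 : W v0 <= 0.
Proof. by rewrite win_profitE subrr mulr0 sub0r oppr_le0 mulr_ge0 ?put_price_ge0. Qed.

Lemma win_profit_sign_le a b : 0 < sigma -> 0 < Delta ->
  0 <= a -> W a <= 0 -> 0 <= W b -> b <= a.
Proof.
move=> sigma_gt0 Delta_gt0 a_ge0 Wa_le0 Wb_ge0; rewrite leNgt; apply/negP => ab.
suff : W b < 0 by rewrite ltNge Wb_ge0.
have [p_lt1|p_ge1] := ltP p 1.
  apply: lt_le_trans Wa_le0; rewrite -subr_gt0 win_profitB.
  apply: ltr_pwDl; first by rewrite mulr_gt0 ?subr_gt0.
  by rewrite mulr_ge0 // subr_ge0 le_put_price // ltW.
have -> : p = 1 by apply/le_anti/andP.
rewrite win_profitE subrr mul0r sub0r mul1r oppr_lt0.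
by apply: put_price_gt0 => //; exact: le_lt_trans ab.
Qed.

Lemma win_profit_ge_subr b e : 0 <= e -> W b - e <= W (b + e).
Proof.
move=> e_ge0; have := win_profit_nonexpansive (b + e) b.
rewrite (_ : b + e - b = e); last by rewrite addrC addKr.
by rewrite (ger0_norm e_ge0) ler_norml => /andP[+ _]; lra.
Qed.

Lemma win_profit_root : exists2 c, 0 <= c <= v0 & W c = 0.
Proof.
have W_sign : Num.min (W 0) (W v0) <= 0 <= Num.max (W 0) (W v0).
  by rewrite ge_min le_max win_profit0_ge0 win_profit_v0_le0 orbT.
have [c] := IVT (ltW v0_gt0) (continuous_subspaceT continuous_win_profit) W_sign.
by rewrite in_itv /=; exists c.
Qed.

End win_profit.
End put_price.

Lemma card_mkset {T : finType} (P : pred T) : #|[set x | P x]| = #|[pred x | P x]|.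
Proof. by apply: eq_card => x; rewrite inE; apply/idP/idP => [/set_mem|/mem_set]. Qed.

Section slow_bidders.
Variables (R : realType) (n : nat).
Implicit Types (bids : 'I_n -> R) (b c : R).

Lemma le_high_bid bids i : bids i <= high_bid bids.
Proof. exact: le_bigmax. Qed.

Lemma high_bid_ge0 bids : 0 <= high_bid bids.
Proof. exact: bigmax_ge_id. Qed.

Lemma high_bid_le bids c : 0 <= c -> (forall i, bids i <= c) -> high_bid bids <= c.
Proof. by move=> c_ge0 bids_le; apply: bigmax_le. Qed.

Lemma high_bid_attained bids : (0 < n)%N -> (forall i, 0 <= bids i) ->
  exists i, bids i = high_bid bids.
Proof.
move=> n_gt0 bids_ge0.
have [i _ max_i] :=
  @eq_bigmax _ _ _ 0 (Ordinal n_gt0) xpredT bids isT (fun i _ => bids_ge0 i).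
by exists i; rewrite /high_bid max_i.
Qed.

Lemma high_bid_cst c : (0 < n)%N -> 0 <= c -> high_bid (fun _ : 'I_n => c) = c.
Proof.
move=> n_gt0 c_ge0; apply/le_anti; rewrite high_bid_le //=.
exact: (le_high_bid _ (Ordinal n_gt0)).
Qed.

Lemma deviate_self bids i b : deviate bids i b i = b.
Proof. by rewrite /deviate eqxx. Qed.

Lemma deviate_other bids i j b : j != i -> deviate bids i b j = bids j.
Proof. by move=> /negbTE ji; rewrite /deviate ji. Qed.

Lemma exists_other_ord : (1 < n)%N -> forall i : 'I_n, exists j, j != i.
Proof.
move=> n_gt1 i; have n_gt0 := ltnW n_gt1.
have [i0|] := eqVneq i (Ordinal n_gt0); last by exists (Ordinal n_gt0); rewrite eq_sym.
by exists (Ordinal n_gt1); rewrite i0.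
Qed.

Variables (sigma Delta v0 p : R).

Local Notation W := (win_profit sigma Delta v0 p).
Local Notation payoff := (slow_payoff sigma Delta v0 p).
Local Notation equilibrium := (slow_equilibrium sigma Delta v0 p).

Lemma slow_payoff_sole_top bids i b : 0 <= b -> (forall j, j != i -> bids j < b) ->
  payoff (deviate bids i b) i = W b.
Proof.
move=> b_ge0 others_lt.
have top : high_bid (deviate bids i b) = b.
  apply/le_anti/andP; split; last by rewrite -{1}(deviate_self bids i b) le_high_bid.
  apply: high_bid_le => // j; have [->|ji] := eqVneq j i; first by rewrite deviate_self.
  by rewrite deviate_other // ltW // others_lt.
have winners : #|[set j | deviate bids i b j == b]| = 1%N.
  rewrite card_mkset -(card1 i); apply: eq_card => j; rewrite !inE.
  have [->|ji] := eqVneq j i; first by rewrite deviate_self eqxx.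
  by rewrite deviate_other // lt_eqF // others_lt.
by rewrite /slow_payoff top deviate_self eqxx winners divr1.
Qed.

Hypotheses (n_gt1 : (1 < n)%N) (v0_gt0 : 0 < v0) (p_ge0 : 0 <= p) (p_le1 : p <= 1).

Lemma slow_payoff_le_half bids : 0 <= W (high_bid bids) ->
  exists j, payoff bids j <= W (high_bid bids) / 2.
Proof.
move=> W_ge0; set B := high_bid bids.
have [[j bj_neq]|all_top] := pselect (exists j, bids j != B).
  by exists j; rewrite /slow_payoff ifN // divr_ge0.
have top k : bids k == B by apply/negPn/negP => bk; apply: all_top; exists k.
have winners : #|[set j | bids j == B]| = n.
  by rewrite card_mkset -[RHS]card_ord; apply: eq_card => k; rewrite !inE top.
exists (Ordinal (ltnW n_gt1)); rewrite /slow_payoff top winners.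
by rewrite ler_wpM2l // lef_pV2 ?posrE ?ltr0n ?ler_nat // ltnW.
Qed.

Lemma slow_payoff_deviate0_ge0 bids i : 0 <= payoff (deviate bids i 0) i.
Proof.
rewrite /slow_payoff deviate_self; case: ifPn => [/eqP <-|_] //.
by rewrite divr_ge0 ?win_profit0_ge0.
Qed.

Lemma cst_slow_equilibrium c : 0 <= c -> W c = 0 -> equilibrium (fun _ : 'I_n => c).
Proof.
move=> c_ge0 Wc0; split=> // i b b_ge0.
rewrite {2}/slow_payoff high_bid_cst ?(ltnW n_gt1) // eqxx Wc0 mul0r.
rewrite /slow_payoff deviate_self; case: ifPn => [/eqP b_top|_] //.
have [j ji] := exists_other_ord n_gt1 i.
have cb : c <= b.
  by rewrite b_top; have := le_high_bid (deviate (fun=> c) i b) j; rewrite deviate_other.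
by rewrite -b_top mulr_le0_ge0 ?invr_ge0 // -Wc0 win_profit_nonincreasing.
Qed.

Lemma exists_slow_equilibrium : exists bids, equilibrium bids.
Proof.
have [c /andP[c_ge0 _] Wc0] := win_profit_root sigma Delta v0_gt0 p_ge0 p_le1.
by exists (fun=> c); exact: cst_slow_equilibrium.
Qed.

Lemma slow_equilibrium_win_profit_ge0 bids : equilibrium bids -> 0 <= W (high_bid bids).
Proof.
move=> [bids_ge0 no_dev]; have [i bi] := high_bid_attained (ltnW n_gt1) bids_ge0.
have k_gt0 : (0 < #|[set j | bids j == high_bid bids]|)%N.
  by apply/card_gt0P; exists i; apply: mem_set; rewrite /= bi.
have := le_trans (slow_payoff_deviate0_ge0 bids i) (no_dev i 0 (lexx 0)).
by rewrite /slow_payoff bi eqxx pmulr_lge0 ?invr_gt0 ?ltr0n.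
Qed.

Lemma slow_equilibrium_win_profit_le0 bids : equilibrium bids -> W (high_bid bids) <= 0.
Proof.
move=> [bids_ge0 no_dev]; set B := high_bid bids.
rewrite leNgt; apply/negP => WB_gt0.
have [j payoff_j] := slow_payoff_le_half (ltW WB_gt0).
pose e := W B / 4; have e_gt0 : 0 < e by rewrite divr_gt0.
have overbid : payoff (deviate bids j (B + e)) j = W (B + e).
  apply: slow_payoff_sole_top; first by rewrite addr_ge0 ?high_bid_ge0 ?ltW.
  by move=> k _; rewrite (le_lt_trans (le_high_bid bids k)) // ltrDl.
have W_near : W B - e <= W (B + e) by rewrite win_profit_ge_subr // ltW.
have := no_dev j (B + e) (addr_ge0 (high_bid_ge0 bids) (ltW e_gt0)).
rewrite overbid; move: payoff_j W_near; rewrite /e; lra.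
Qed.

Lemma slow_equilibrium_win_profit0 bids : equilibrium bids -> W (high_bid bids) = 0.
Proof.
move=> eq_bids; apply/le_anti.
by rewrite slow_equilibrium_win_profit_le0 ?slow_equilibrium_win_profit_ge0.
Qed.

End slow_bidders.

Theorem mainTheorem5 (R : realType) (n : nat) (sigma Delta v0 p : R) :
  (2 <= n)%N -> 0 < sigma -> 0 < Delta -> 0 < v0 -> 0 <= p -> p <= 1 ->
  (exists bids : 'I_n -> R, slow_equilibrium sigma Delta v0 p bids) /\
  (forall bids : 'I_n -> R, slow_equilibrium sigma Delta v0 p bids ->
     let b0S := high_bid bids in
     [/\ 0 <= b0S <= v0,
         zero_profit sigma Delta v0 p b0S,
         (forall b : R, 0 <= b <= v0 -> zero_profit sigma Delta v0 p b -> b <= b0S)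
       & slow_win_prob sigma Delta v0 p bids
           = p * P_lt sigma Delta v0 b0S + (1 - p)]).
Proof.
move=> n_gt1 sigma_gt0 Delta_gt0 v0_gt0 p_ge0 p_le1.
split=> [|bids eq_bids /=]; first exact: exists_slow_equilibrium.
have WB0 := slow_equilibrium_win_profit0 n_gt1 v0_gt0 p_ge0 p_le1 eq_bids.
have sign_le := win_profit_sign_le v0_gt0 p_ge0 p_le1 sigma_gt0 Delta_gt0.
split.
- by rewrite high_bid_ge0 sign_le ?(ltW v0_gt0) ?win_profit_v0_le0 ?WB0.
- exact/(zero_profitE _ _ v0_gt0).
- move=> b /andP[b_ge0 _] /(zero_profitE _ _ v0_gt0) Wb0.
  by rewrite sign_le ?high_bid_ge0 ?WB0 ?Wb0.
- by rewrite /slow_win_prob P_le_lt // addrC.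
Qed.
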